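(* Let $a:[0,\infty)\to[0,\infty)$ be non-negative and non-decreasing, let $f(x)=\exp(-\int_0^x a(y)dy)$, and for $s\ge1$ let $q_s(n)=\prod_{k=0}^n\bigl(1+\tfrac1{\sqrt s}a\bigl(\tfrac{k+1}{\sqrt s}\bigr)\bigr)^{-1}$, $n\in\mathbb N_0$. Then there is an increasing function $\psi(s)$ of $s\ge1$ with $\psi(s)\to\infty$ as $s\to\infty$ such that $q_s(n)=f\bigl(\tfrac{n+1}{\sqrt s}\bigr)\bigl(1+O(s^{-1/4})\bigr)$ for $0\le n+1\le\sqrt s\,\psi(s)$.
   Context: $q_s(n)=p_s(0)\cdots p_s(n)$ for the local admission control $p_s(k)=\bigl(1+\tfrac1{\sqrt s}a(\tfrac{k+1}{\sqrt s})\bigr)^{-1}$ of an $s$-server system. *)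

From Stdlib Require Import Reals.
From Coquelicot Require Import Coquelicot.
Open Scope R_scope.

Definition p_adm (a : R -> R) (s : R) (k : nat) : R :=
  / (1 + / sqrt s * a (INR (k + 1) / sqrt s)).

Fixpoint q_adm (a : R -> R) (s : R) (n : nat) : R :=
  match n with
  | O => p_adm a s 0
  | S m => q_adm a s m * p_adm a s (S m)
  end.

Definition f_adm (a : R -> R) (x : R) : R := exp (- RInt a 0 x).

From Stdlib Require Import Reals Lra Lia Psatz.
From Coquelicot Require Import Coquelicot.
Open Scope R_scope.

(* Put u_k = a((k+1)/sqrt s)/sqrt s and x = (n+1)/sqrt s.  From
   e^(-u) <= 1/(1+u) <= e^(-u+u^2), log q_s(n) lies between -sum u_k and
   -sum u_k + sum u_k^2.  Now sum u_k is an upper Riemann sum of the integral of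
   [a] over [0, x] (which exists since [a] is monotone), and by monotonicity it
   exceeds the integral by at most a(x)/sqrt s, while sum u_k^2 <= x a(x)^2/sqrt s.
   So q_s(n) = f(x) e^theta with |theta| <= (a(x) + x a(x)^2)/sqrt s, which is at
   most s^(-1/4) as long as a(x) + x a(x)^2 <= s^(1/4); psi(s) is chosen to keep
   x in that range. *)

(* Darboux-type criterion: the Riemann sums of [f] are trapped between those of [g] and [h],
   which makes the Riemann-sum filter Cauchy. *)
Lemma ex_RInt_sandwich (f : R -> R) (c d : R) : c < d ->
  (forall eps : posreal, exists g h : R -> R, ex_RInt g c d /\ ex_RInt h c d /\
     (forall t, c <= t <= d -> g t <= f t <= h t) /\ RInt h c d - RInt g c d < eps) ->
  ex_RInt f c d.
Proof.
  intros Hcd Hsw.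
  set (F := filtermap (fun ptd => scal (sign (d - c)) (Riemann_sum f ptd)) (Riemann_fine c d)).
  assert (F_proper : ProperFilter F) by (apply filtermap_proper_filter, Riemann_fine_filter).
  assert (sign_dc : sign (d - c) = 1) by (apply sign_eq_1; lra).
  assert (F_cauchy : cauchy F).
  { intros [eps eps_pos].
    assert (Heps2 : 0 < eps / 2) by lra.
    destruct (Hsw (mkposreal _ Heps2)) as [g [h [Hg [Hh [Hgfh Hgap]]]]]; simpl in Hgap.
    exists (RInt g c d).
    assert (Sg := proj1 (filterlim_locally _ _) (RInt_correct g c d Hg) (mkposreal _ Heps2)).
    assert (Sh := proj1 (filterlim_locally _ _) (RInt_correct h c d Hh) (mkposreal _ Heps2)).
    assert (Hptd : Riemann_fine c d (fun ptd => pointed_subdiv ptd /\ SF_h ptd = Rmin c d /\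
                     seq.last (SF_h ptd) (SF_lx ptd) = Rmax c d)).
    { unfold Riemann_fine, within. apply filter_forall. auto. }
    unfold F, filtermap.
    generalize (filter_and _ _ Hptd (filter_and _ _ Sg Sh)).
    apply filter_imp. intros ptd [[Hp [Hfirst Hlast]] [Bg Bh]].
    rewrite Rmin_left in Hfirst by lra. rewrite Rmax_right in Hlast by lra.
    assert (Lg : Riemann_sum g ptd <= Riemann_sum f ptd).
    { apply Riemann_sum_le; [exact Hp|]. intros t Ht.
      rewrite Hlast, Hfirst in Ht. apply Hgfh, Ht. }
    assert (Lh : Riemann_sum f ptd <= Riemann_sum h ptd).
    { apply Riemann_sum_le; [exact Hp|]. intros t Ht.
      rewrite Hlast, Hfirst in Ht. apply Hgfh, Ht. }
    change (Rabs (sign (d - c) * Riemann_sum g ptd - RInt g c d) < eps / 2) in Bg.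
    change (Rabs (sign (d - c) * Riemann_sum h ptd - RInt h c d) < eps / 2) in Bh.
    change (Rabs (sign (d - c) * Riemann_sum f ptd - RInt g c d) < eps).
    rewrite sign_dc, !Rmult_1_l in Bg, Bh |- *.
    apply Rabs_lt_between' in Bg, Bh. apply Rabs_lt_between'. lra. }
  exists (lim F). apply filterlim_locally. intros eps.
  exact (complete_cauchy F F_proper F_cauchy eps).
Qed.

Lemma RInt_const_R (c d v : R) : RInt (fun _ => v) c d = (d - c) * v.
Proof. rewrite RInt_const. reflexivity. Qed.

Lemma RInt_glue (g1 g2 : R -> R) (c m e : R) : c <= m <= e ->
  ex_RInt g1 c m -> ex_RInt g2 m e ->
  let g := fun t => if Rlt_dec t m then g1 t else g2 t in
  ex_RInt g c e /\ RInt g c e = RInt g1 c m + RInt g2 m e.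
Proof.
  intros Hcme Hg1 Hg2 g.
  assert (E1 : forall t, Rmin c m < t < Rmax c m -> g1 t = g t).
  { intros t Ht. rewrite Rmin_left, Rmax_right in Ht by lra.
    unfold g. destruct (Rlt_dec t m); [reflexivity | lra]. }
  assert (E2 : forall t, Rmin m e < t < Rmax m e -> g2 t = g t).
  { intros t Ht. rewrite Rmin_left, Rmax_right in Ht by lra.
    unfold g. destruct (Rlt_dec t m); [lra | reflexivity]. }
  assert (G1 := ex_RInt_ext _ _ _ _ E1 Hg1).
  assert (G2 := ex_RInt_ext _ _ _ _ E2 Hg2).
  split; [exact (ex_RInt_Chasles g c m e G1 G2)|].
  rewrite <- (RInt_Chasles g c m e G1 G2), (RInt_ext _ _ _ _ E1), (RInt_ext _ _ _ _ E2).
  reflexivity.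
Qed.

Section Increasing.
Variable f : R -> R.
Hypothesis f_incr : increasing f.

Lemma step_sandwich (dl : R) (k : nat) (c : R) : 0 < dl ->
  let e := c + INR (S k) * dl in
  exists g h : R -> R, ex_RInt g c e /\ ex_RInt h c e /\
    (forall t, c <= t <= e -> g t <= f t <= h t) /\
    RInt h c e - RInt g c e = dl * (f e - f c).
Proof.
  intros Hdl. revert c. induction k as [|k IH]; intros c e.
  - exists (fun _ => f c), (fun _ => f e). unfold e; simpl; rewrite Rmult_1_l.
    split; [apply ex_RInt_const|]. split; [apply ex_RInt_const|]. split.
    + intros t Ht. split; apply f_incr; lra.
    + rewrite !RInt_const_R. ring.
  - destruct (IH (c + dl)) as [g [h [Hg [Hh [Hgfh Hgap]]]]].
    replace (c + dl + INR (S k) * dl) with e in *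
      by (unfold e; rewrite (S_INR (S k)); ring).
    assert (Hpos : 0 <= INR (S k) * dl) by (apply Rmult_le_pos; [apply pos_INR | lra]).
    assert (Hm : c <= c + dl <= e) by (unfold e; rewrite (S_INR (S k)); lra).
    destruct (RInt_glue (fun _ => f c) g c (c + dl) e Hm (ex_RInt_const _ _ _) Hg)
      as [Hg' Ig'].
    destruct (RInt_glue (fun _ => f (c + dl)) h c (c + dl) e Hm (ex_RInt_const _ _ _) Hh)
      as [Hh' Ih'].
    eexists; eexists. split; [exact Hg'|]. split; [exact Hh'|]. split.
    + intros t Ht. destruct (Rlt_dec t (c + dl)).
      * split; apply f_incr; lra.
      * apply Hgfh. lra.
    + rewrite Ig', Ih', !RInt_const_R. lra.
Qed.

Lemma ex_RInt_increasing_lt (c d : R) : c < d -> ex_RInt f c d.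
Proof.
  intros Hcd. apply ex_RInt_sandwich; [exact Hcd|]. intros eps.
  set (K := (d - c) * (f d - f c)).
  assert (HK : 0 <= K) by (apply Rmult_le_pos; [|assert (f c <= f d) by (apply f_incr; lra)]; lra).
  destruct (archimed_cor1 (eps / (K + 1))) as [N [HN HN0]].
  { apply Rdiv_lt_0_compat; [apply cond_pos | lra]. }
  destruct N as [|k]; [lia|].
  assert (Hk : 0 < INR (S k)) by (apply lt_0_INR; lia).
  set (dl := (d - c) / INR (S k)).
  assert (Hdl : 0 < dl) by (apply Rdiv_lt_0_compat; lra).
  destruct (step_sandwich dl k c Hdl) as [g [h H]].
  replace (c + INR (S k) * dl) with d in H by (unfold dl; field; lra).
  exists g, h. destruct H as [Hg [Hh [Hgfh ->]]]. do 3 (split; [assumption|]).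
  replace (dl * (f d - f c)) with (K / INR (S k)) by (unfold dl, K; field; lra).
  assert (Hinv : 0 < / INR (S k)) by (apply Rinv_0_lt_compat; lra).
  assert (Hgap : (K + 1) * / INR (S k) < (K + 1) * (eps / (K + 1)))
    by (apply Rmult_lt_compat_l; lra).
  replace ((K + 1) * (eps / (K + 1))) with (pos eps) in Hgap by (field; lra).
  assert (K * / INR (S k) <= (K + 1) * / INR (S k)) by (apply Rmult_le_compat_r; lra).
  unfold Rdiv. lra.
Qed.

Lemma ex_RInt_increasing (c d : R) : ex_RInt f c d.
Proof.
  destruct (Rtotal_order c d) as [Hlt | [<- | Hgt]].
  - exact (ex_RInt_increasing_lt c d Hlt).
  - apply ex_RInt_point.
  - apply ex_RInt_swap, ex_RInt_increasing_lt, Hgt.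
Qed.

End Increasing.

Lemma sum_f_R0_shift_sub (g : nat -> R) (n : nat) :
  sum_f_R0 (fun k => g (S k)) n - sum_f_R0 g n = g (S n) - g O.
Proof. induction n as [|n IH]; simpl; lra. Qed.

Lemma inv_1p_bounds (u : R) : 0 <= u -> exp (- u) <= / (1 + u) <= exp (- u + u ^ 2).
Proof.
  intros Hu. split.
  - rewrite exp_Ropp. apply Rinv_le_contravar; [lra|]. pose proof (exp_ineq1_le u). lra.
  - apply Rle_trans with (1 - u + u ^ 2).
    + assert (E : (1 - u + u ^ 2) - / (1 + u) = u ^ 3 / (1 + u)) by (field; lra).
      assert (0 <= u ^ 3 / (1 + u)) by (apply Rdiv_le_0_compat; [apply pow_le|]; lra).
      lra.
    + pose proof (exp_ineq1_le (- u + u ^ 2)). lra.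
Qed.

Lemma exp_le_compat (x y : R) : x <= y -> exp x <= exp y.
Proof.
  intros [Hlt | ->]; [apply Rlt_le, exp_increasing, Hlt | apply Rle_refl].
Qed.

Lemma exp_le_1_plus_2x (x : R) : 0 <= x <= 1 / 2 -> exp x <= 1 + 2 * x.
Proof.
  intros Hx. rewrite <- (Ropp_involutive x), exp_Ropp, Ropp_involutive.
  pose proof (exp_ineq1_le (- x)).
  apply Rle_trans with (/ (1 - x)); [apply Rinv_le_contravar; lra|].
  assert (E : 1 + 2 * x - / (1 - x) = x * (1 - 2 * x) / (1 - x)) by (field; lra).
  assert (0 <= x * (1 - 2 * x) / (1 - x)) by (apply Rdiv_le_0_compat; [apply Rmult_le_pos|]; lra).
  lra.
Qed.

Lemma exp_sandwich_near_1 (r E : R) : 0 <= E <= 1 / 2 ->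
  exp (- E) <= r <= exp E -> Rabs (r - 1) <= 2 * E.
Proof.
  intros HE Hr. pose proof (exp_ineq1_le (- E)). pose proof (exp_le_1_plus_2x E HE).
  apply Rabs_le. lra.
Qed.

Section HalfLineMonotone.
Variable a : R -> R.
Hypothesis a_mono : forall x y, 0 <= x -> x <= y -> a x <= a y.

Lemma ex_RInt_nonneg_half_line (c d : R) : 0 <= c -> 0 <= d -> ex_RInt a c d.
Proof.
  intros Hc Hd.
  apply ex_RInt_ext with (fun x => a (Rmax 0 x)).
  - intros x Hx. rewrite Rmax_right; [reflexivity|].
    pose proof (Rmin_glb c d 0 Hc Hd). lra.
  - apply ex_RInt_increasing. intros x y Hxy.
    apply a_mono; [apply Rmax_l | apply Rle_max_compat_l, Hxy].
Qed.

Lemma RInt_step_bounds (c h : R) : 0 <= c -> 0 < h ->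
  h * a c <= RInt a c (c + h) <= h * a (c + h).
Proof.
  intros Hc Hh.
  assert (Ha : ex_RInt a c (c + h)) by (apply ex_RInt_nonneg_half_line; lra).
  assert (Hconst : forall v, h * v = RInt (fun _ => v) c (c + h))
    by (intros v; rewrite RInt_const_R; ring).
  rewrite !Hconst. split; apply RInt_le; try lra; try assumption;
    try apply ex_RInt_const; intros x Hx; apply a_mono; lra.
Qed.

Lemma RInt_riemann_sums_bounds (h : R) (n : nat) : 0 < h ->
  sum_f_R0 (fun k => h * a (INR k * h)) n <= RInt a 0 (INR (S n) * h) <=
  sum_f_R0 (fun k => h * a (INR (S k) * h)) n.
Proof.
  intros Hh. induction n as [|n IH].
  - simpl. rewrite Rmult_0_l, Rmult_1_l.
    pose proof (RInt_step_bounds 0 h (Rle_refl 0) Hh) as B. rewrite Rplus_0_l in B. lra.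
  - assert (Hc : 0 <= INR (S n) * h) by (apply Rmult_le_pos; [apply pos_INR | lra]).
    rewrite !tech5.
    replace (INR (S (S n)) * h) with (INR (S n) * h + h) by (rewrite (S_INR (S n)); ring).
    rewrite <- (RInt_Chasles a 0 (INR (S n) * h));
      [| apply ex_RInt_nonneg_half_line; lra ..].
    pose proof (RInt_step_bounds (INR (S n) * h) h Hc Hh).
    change plus with Rplus. lra.
Qed.

End HalfLineMonotone.

Definition u_adm (a : R -> R) (s : R) (k : nat) : R := / sqrt s * a (INR (S k) * / sqrt s).

Definition err_adm (a : R -> R) (y : R) : R := a y + y * a y ^ 2.

Section Admission.
Variable a : R -> R.
Hypothesis a_nonneg : forall x, 0 <= x -> 0 <= a x.
Hypothesis a_mono : forall x y, 0 <= x -> x <= y -> a x <= a y.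
Variable s : R.
Hypothesis s_pos : 0 < s.

Let h_pos : 0 < / sqrt s.
Proof. apply Rinv_0_lt_compat, sqrt_lt_R0, s_pos. Qed.

Lemma u_adm_nonneg k : 0 <= u_adm a s k.
Proof.
  apply Rmult_le_pos; [lra|]. apply a_nonneg, Rmult_le_pos; [apply pos_INR | lra].
Qed.

Lemma q_adm_bounds n :
  exp (- sum_f_R0 (u_adm a s) n) <= q_adm a s n <=
  exp (- sum_f_R0 (u_adm a s) n + sum_f_R0 (fun k => u_adm a s k ^ 2) n).
Proof.
  assert (Hp : forall k, p_adm a s k = / (1 + u_adm a s k))
    by (intros k; unfold p_adm; rewrite Nat.add_1_r; reflexivity).
  induction n as [|n IH].
  - simpl q_adm. rewrite Hp. simpl. apply inv_1p_bounds, u_adm_nonneg.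
  - simpl q_adm. rewrite Hp, !tech5.
    destruct (inv_1p_bounds (u_adm a s (S n)) (u_adm_nonneg _)) as [P1 P2].
    assert (Hq : 0 <= q_adm a s n) by (pose proof (exp_pos (- sum_f_R0 (u_adm a s) n)); lra).
    assert (Hp0 : 0 <= / (1 + u_adm a s (S n))) by (pose proof (exp_pos (- u_adm a s (S n))); lra).
    set (U := sum_f_R0 (u_adm a s) n) in *.
    set (V := sum_f_R0 (fun k => u_adm a s k ^ 2) n) in *.
    set (u := u_adm a s (S n)) in *.
    replace (exp (- (U + u))) with (exp (- U) * exp (- u))
      by (rewrite <- exp_plus; f_equal; ring).
    replace (exp (- (U + u) + (V + u ^ 2))) with (exp (- U + V) * exp (- u + u ^ 2))
      by (rewrite <- exp_plus; f_equal; ring).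
    split; apply Rmult_le_compat; try lra; apply Rlt_le, exp_pos.
Qed.

Lemma sum_u_adm_sq_le n : let x := INR (S n) * / sqrt s in
  sum_f_R0 (fun k => u_adm a s k ^ 2) n <= / sqrt s * (x * a x ^ 2).
Proof.
  intros x.
  assert (Hx : 0 <= x) by (apply Rmult_le_pos; [apply pos_INR | lra]).
  assert (Hu : forall k, (k <= n)%nat -> u_adm a s k ^ 2 <= (/ sqrt s * a x) ^ 2).
  { intros k Hk. pose proof (u_adm_nonneg k).
    assert (u_adm a s k <= / sqrt s * a x).
    { apply Rmult_le_compat_l; [lra|]. apply a_mono.
      - apply Rmult_le_pos; [apply pos_INR | lra].
      - apply Rmult_le_compat_r; [lra|]. apply le_INR. lia. }
    apply pow_incr. lra. }
  apply Rle_trans with (sum_f_R0 (fun _ => (/ sqrt s * a x) ^ 2) n); [apply sum_Rle, Hu|].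
  rewrite sum_cte. set (y := a x). unfold x. right. ring.
Qed.

Lemma sum_u_adm_sub_RInt n : let x := INR (S n) * / sqrt s in
  0 <= sum_f_R0 (u_adm a s) n - RInt a 0 x <= / sqrt s * a x.
Proof.
  intros x.
  destruct (RInt_riemann_sums_bounds a a_mono (/ sqrt s) n h_pos) as [Hlow Hup].
  pose proof (sum_f_R0_shift_sub (fun k => / sqrt s * a (INR k * / sqrt s)) n) as Htel.
  cbv beta in Htel. change (INR 0) with 0 in Htel. rewrite Rmult_0_l in Htel.
  assert (0 <= / sqrt s * a 0) by (apply Rmult_le_pos; [| apply a_nonneg]; lra).
  fold x in Hlow, Hup, Htel. unfold u_adm. lra.
Qed.

Lemma q_adm_rel_error n :
  let x := INR (S n) * / sqrt s in
  / sqrt s * err_adm a x <= 1 / 2 ->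
  exists eps, Rabs eps <= 2 * (/ sqrt s * err_adm a x) /\ q_adm a s n = f_adm a x * (1 + eps).
Proof.
  intros x. set (E := / sqrt s * err_adm a x). intros HE.
  assert (Hx : 0 <= x) by (apply Rmult_le_pos; [apply pos_INR | lra]).
  assert (Hax : 0 <= / sqrt s * a x) by (apply Rmult_le_pos; [| apply a_nonneg]; lra).
  assert (Hxax : 0 <= / sqrt s * (x * a x ^ 2))
    by (apply Rmult_le_pos; [| apply Rmult_le_pos; [| apply pow2_ge_0]]; lra).
  assert (HE_split : E = / sqrt s * a x + / sqrt s * (x * a x ^ 2)) by (unfold E, err_adm; ring).
  assert (HE0 : 0 <= E) by lra.
  destruct (q_adm_bounds n) as [Qlow Qup].
  pose proof (sum_u_adm_sq_le n) as Hsq. pose proof (sum_u_adm_sub_RInt n) as Hsub.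
  cbv zeta in Hsq, Hsub. fold x in Hsq, Hsub.
  set (I := RInt a 0 x) in *.
  set (r := q_adm a s n * exp I).
  assert (Hr : exp (- E) <= r <= exp E).
  { unfold r. split.
    - apply Rle_trans with (exp (- sum_f_R0 (u_adm a s) n) * exp I);
        [rewrite <- exp_plus; apply exp_le_compat; lra |].
      apply Rmult_le_compat_r; [apply Rlt_le, exp_pos | exact Qlow].
    - apply Rle_trans with
        (exp (- sum_f_R0 (u_adm a s) n + sum_f_R0 (fun k => u_adm a s k ^ 2) n) * exp I);
        [apply Rmult_le_compat_r; [apply Rlt_le, exp_pos | exact Qup] |].
      rewrite <- exp_plus; apply exp_le_compat; lra. }
  exists (r - 1). split; [exact (exp_sandwich_near_1 r E (conj HE0 HE) Hr) |].
  unfold f_adm, r. fold I.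
  replace (exp (- I) * (1 + (q_adm a s n * exp I - 1))) with
    (q_adm a s n * (exp (- I) * exp I)) by ring.
  rewrite <- exp_plus, Rplus_opp_l, exp_0. ring.
Qed.

End Admission.

Fixpoint count_below (G : R -> R) (t : R) (K : nat) : nat :=
  match K with
  | O => O
  | S K' => (count_below G t K' + if Rle_dec (G (INR (S K'))) t then 1 else 0)%nat
  end.

Section CountBelow.
Variable G : R -> R.
Hypothesis G_mono : forall x y, 0 <= x -> x <= y -> G x <= G y.

Lemma count_below_le t K : (count_below G t K <= K)%nat.
Proof. induction K; cbn [count_below]; [lia|]. destruct (Rle_dec _ _); lia. Qed.

Lemma count_below_mono_bound t K1 K2 :
  (K1 <= K2)%nat -> (count_below G t K1 <= count_below G t K2)%nat.
Proof.
  induction 1 as [|K2 _ IH]; [lia|]. cbn [count_below]. lia.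
Qed.

Lemma count_below_mono_level t1 t2 K :
  t1 <= t2 -> (count_below G t1 K <= count_below G t2 K)%nat.
Proof.
  intros Ht. induction K; cbn [count_below]; [lia|].
  destruct (Rle_dec _ t1), (Rle_dec _ t2); try lia. lra.
Qed.

Lemma G_count_below_le t K : (1 <= count_below G t K)%nat -> G (INR (count_below G t K)) <= t.
Proof.
  induction K as [|K IH]; cbn [count_below]; [lia|].
  destruct (Rle_dec (G (INR (S K))) t) as [Hle | _]; [intros _ | rewrite Nat.add_0_r; exact IH].
  apply Rle_trans with (G (INR (S K))); [|exact Hle].
  apply G_mono; [apply pos_INR|]. apply le_INR. pose proof (count_below_le t K). lia.
Qed.

Lemma count_below_ge t m K :
  (m <= K)%nat -> G (INR m) <= t -> (m <= count_below G t K)%nat.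
Proof.
  intros HmK Hm.
  assert (Hfull : count_below G t m = m).
  { clear HmK. assert (Hj : forall j, (j <= m)%nat -> G (INR j) <= t).
    { intros j Hj. apply Rle_trans with (G (INR m)); [|exact Hm].
      apply G_mono; [apply pos_INR | apply le_INR, Hj]. }
    clear Hm. induction m as [|m IH]; cbn [count_below]; [reflexivity|].
    rewrite IH by (intros j Hjm; apply Hj; lia).
    destruct (Rle_dec _ _) as [_ | Hn]; [lia | exfalso; apply Hn, Hj; lia]. }
  rewrite <- Hfull at 1. apply count_below_mono_bound, HmK.
Qed.

End CountBelow.

(* The count is the largest integer m <= up s with err_adm a m <= s^(1/4) (or 0);
   the - 1/s makes psi strictly increasing. *)
Definition psi_adm (a : R -> R) (s : R) : R :=
  INR (count_below (err_adm a) (sqrt (sqrt s)) (Z.to_nat (up s))) - / s.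

Lemma up_le (x y : R) : x <= y -> (up x <= up y)%Z.
Proof. intros Hxy. rewrite !up_Zfloor. pose proof (Zfloor_le x y Hxy). lia. Qed.

Lemma le_to_nat_up (m : nat) (s : R) : INR m <= s -> (m <= Z.to_nat (up s))%nat.
Proof.
  intros Hm. destruct (archimed s) as [Hup _].
  assert (Hlt : (Z.of_nat m < up s)%Z) by (apply lt_IZR; rewrite <- INR_IZR_INZ; lra).
  lia.
Qed.

Lemma le_sqrt_sqrt (y s : R) : 0 <= y -> (y * y) * (y * y) <= s -> y <= sqrt (sqrt s).
Proof.
  intros Hy Hs.
  rewrite <- (sqrt_Rsqr y Hy), <- (sqrt_Rsqr (y²)) by apply Rle_0_sqr.
  apply sqrt_le_1_alt, sqrt_le_1_alt. exact Hs.
Qed.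

Section Psi.
Variable a : R -> R.
Hypothesis a_nonneg : forall x, 0 <= x -> 0 <= a x.
Hypothesis a_mono : forall x y, 0 <= x -> x <= y -> a x <= a y.

Lemma err_adm_nonneg y : 0 <= y -> 0 <= err_adm a y.
Proof.
  intros Hy. pose proof (a_nonneg y Hy).
  apply Rplus_le_le_0_compat; [lra | apply Rmult_le_pos; [lra | apply pow2_ge_0]].
Qed.

Lemma err_adm_mono x y : 0 <= x -> x <= y -> err_adm a x <= err_adm a y.
Proof.
  intros Hx Hxy. unfold err_adm.
  pose proof (a_nonneg x Hx). pose proof (a_mono x y Hx Hxy).
  assert (a x ^ 2 <= a y ^ 2) by (apply pow_incr; lra).
  assert (x * a x ^ 2 <= y * a y ^ 2) by (apply Rmult_le_compat; try apply pow2_ge_0; lra).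
  lra.
Qed.

Lemma psi_adm_strict_mono s t : 0 < s -> s < t -> psi_adm a s < psi_adm a t.
Proof.
  intros Hs Hst. unfold psi_adm.
  assert (Hcount : (count_below (err_adm a) (sqrt (sqrt s)) (Z.to_nat (up s)) <=
                    count_below (err_adm a) (sqrt (sqrt t)) (Z.to_nat (up t)))%nat).
  { apply Nat.le_trans with (count_below (err_adm a) (sqrt (sqrt t)) (Z.to_nat (up s))).
    - apply count_below_mono_level, sqrt_le_1_alt, sqrt_le_1_alt. lra.
    - apply count_below_mono_bound.
      pose proof (up_le s t ltac:(lra)). lia. }
  apply le_INR in Hcount.
  assert (/ t < / s) by (apply Rinv_lt_contravar; [apply Rmult_lt_0_compat |]; lra).
  lra.
Qed.

Lemma psi_adm_unbounded M : exists S0, forall s, S0 <= s -> M <= psi_adm a s.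
Proof.
  destruct (INR_unbounded (M + 1)) as [m Hm].
  set (g := err_adm a (INR m)).
  exists (Rmax 1 (Rmax (INR m) ((g * g) * (g * g)))). intros s Hs.
  pose proof (Rmax_l 1 (Rmax (INR m) ((g * g) * (g * g)))).
  pose proof (Rmax_r 1 (Rmax (INR m) ((g * g) * (g * g)))).
  pose proof (Rmax_l (INR m) ((g * g) * (g * g))).
  pose proof (Rmax_r (INR m) ((g * g) * (g * g))).
  assert (Hcount : (m <= count_below (err_adm a) (sqrt (sqrt s)) (Z.to_nat (up s)))%nat).
  { apply count_below_ge; [exact err_adm_mono | apply le_to_nat_up; lra |].
    apply le_sqrt_sqrt; [apply err_adm_nonneg, pos_INR | fold g; lra]. }
  apply le_INR in Hcount.
  assert (/ s <= 1) by (rewrite <- Rinv_1; apply Rinv_le_contravar; lra).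
  unfold psi_adm. lra.
Qed.

Lemma err_adm_le_of_le_psi s x : 0 < s -> 0 <= x -> x <= psi_adm a s ->
  err_adm a x <= sqrt (sqrt s).
Proof.
  intros Hs Hx Hxpsi. unfold psi_adm in Hxpsi.
  set (N := count_below (err_adm a) (sqrt (sqrt s)) (Z.to_nat (up s))) in Hxpsi.
  assert (/ s > 0) by (apply Rinv_0_lt_compat, Hs).
  assert (HN : (1 <= N)%nat) by (destruct N; [simpl in Hxpsi; lra | lia]).
  apply Rle_trans with (err_adm a (INR N)).
  - apply err_adm_mono; lra.
  - apply G_count_below_le; [exact err_adm_mono | exact HN].
Qed.

Lemma q_adm_rel_error_le_psi s n : 16 <= s -> INR (S n) <= sqrt s * psi_adm a s ->
  exists eps, Rabs eps <= 2 * / sqrt (sqrt s) /\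
    q_adm a s n = f_adm a (INR (S n) / sqrt s) * (1 + eps).
Proof.
  intros Hs Hn.
  assert (Hsq : 0 < sqrt s) by (apply sqrt_lt_R0; lra).
  set (t := sqrt (sqrt s)).
  assert (Htt : t * t = sqrt s) by (apply sqrt_sqrt, sqrt_pos).
  assert (Ht2 : 2 <= t) by (apply le_sqrt_sqrt; lra).
  set (x := INR (S n) * / sqrt s).
  assert (Hx : 0 <= x) by (apply Rmult_le_pos; [apply pos_INR | apply Rlt_le, Rinv_0_lt_compat, Hsq]).
  assert (Hxpsi : x <= psi_adm a s).
  { unfold x. apply (Rmult_le_reg_l (sqrt s) _ _ Hsq).
    replace (sqrt s * (INR (S n) * / sqrt s)) with (INR (S n)) by (field; lra). exact Hn. }
  assert (Herr := err_adm_le_of_le_psi s x ltac:(lra) Hx Hxpsi). fold t in Herr.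
  assert (HE : / sqrt s * err_adm a x <= / t).
  { rewrite <- Htt. replace (/ t) with (/ (t * t) * t) by (field; lra).
    apply Rmult_le_compat_l; [apply Rlt_le, Rinv_0_lt_compat; nra | exact Herr]. }
  assert (HE2 : / sqrt s * err_adm a x <= 1 / 2).
  { apply Rle_trans with (/ t); [exact HE|].
    unfold Rdiv; rewrite Rmult_1_l; apply Rinv_le_contravar; lra. }
  destruct (q_adm_rel_error a a_nonneg a_mono s ltac:(lra) n HE2) as [eps [Heps Hq]].
  exists eps. split; [fold x in Heps; lra | exact Hq].
Qed.

End Psi.

Lemma Rpower_neg_quarter (s : R) : 0 < s -> Rpower s (- / 4) = / sqrt (sqrt s).
Proof.
  intros Hs. rewrite Rpower_Ropp. f_equal.
  replace (/ 4) with (/ 2 * / 2) by field.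
  rewrite <- Rpower_mult, (Rpower_sqrt s Hs). apply Rpower_sqrt, sqrt_lt_R0, Hs.
Qed.

Theorem proposition5p1 (a : R -> R)
  (a_nonneg : forall x, 0 <= x -> 0 <= a x)
  (a_mono : forall x y, 0 <= x -> x <= y -> a x <= a y) :
  exists psi : R -> R,
    (forall s t, 1 <= s -> s < t -> psi s < psi t) /\
    (forall M : R, exists S0 : R, forall s, S0 <= s -> M <= psi s) /\
    (exists C s0 : R, 1 <= s0 /\ forall (s : R) (n : nat),
        s0 <= s -> INR (n + 1) <= sqrt s * psi s ->
        exists eps : R, Rabs eps <= C * Rpower s (- / 4) /\
          q_adm a s n = f_adm a (INR (n + 1) / sqrt s) * (1 + eps)).
Proof.
  exists (psi_adm a). split; [|split].
  - intros s t Hs Hst. apply psi_adm_strict_mono; lra.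
  - apply psi_adm_unbounded; assumption.
  - exists 2, 16. split; [lra|]. intros s n Hs Hn.
    rewrite Nat.add_1_r in Hn |- *. rewrite Rpower_neg_quarter by lra.
    exact (q_adm_rel_error_le_psi a a_nonneg a_mono s n Hs Hn).
Qed.
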